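(* Let $\sigma\ge 2$, $k\ge 1$, let $U$ be any rotation of a $\sigma$-ary de Bruijn cycle of order $k$, and let $w_{\mathrm{lin}}=U\,U[0..k-2]$. Then the number $r$ of runs of $\operatorname{BWT}(w_{\mathrm{lin}}\$)$ satisfies $r\ge \sigma^{k-1}(\sigma-1)+1$.
   Context: A $\sigma$-ary de Bruijn cycle of order $k$ is a cyclic word of length $\sigma^k$ over an ordered alphabet $\Sigma$ of size $\sigma$ in which every word of $\Sigma^k$ occurs exactly once as a cyclic length-$k$ window. Strings are $0$-indexed. $\$\notin\Sigma$ is an end-marker smaller than all letters, appended once. $\operatorname{BWT}(v)$ is the last column of the matrix whose rows are the cyclic rotations of $v$ sorted lexicographically; a run is a maximal block of one repeated symbol. *)

From mathcomp Require Import all_boot.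
Set Implicit Arguments. Unset Strict Implicit. Unset Printing Implicit Defensive.

(* After appending the end-marker, symbols are [option nat]:
   [None] is the end-marker $, [Some a] is the letter a. *)

Definition cyc_window (u : seq nat) (k i : nat) : seq nat :=
  [seq nth 0 u ((i + j) %% size u) | j <- iota 0 k].

Definition is_deBruijn (sigma k : nat) (u : seq nat) : Prop :=
  size u = sigma ^ k /\ all (fun a => a < sigma) u /\
  forall w : seq nat, size w = k -> all (fun a => a < sigma) w ->
    count (fun i => cyc_window u k i == w) (iota 0 (size u)) = 1.

Definition sym_lt (x y : option nat) : bool :=
  match x, y with
  | None, Some _ => true
  | Some a, Some b => a < b
  | _, _ => false
  end.

Fixpoint lex_le (s t : seq (option nat)) : bool :=
  match s, t with
  | [::], _ => true
  | _ :: _, [::] => false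
  | x :: s', y :: t' => sym_lt x y || ((x == y) && lex_le s' t')
  end.

Definition bwt_matrix (v : seq (option nat)) : seq (seq (option nat)) :=
  sort lex_le [seq rot i v | i <- iota 0 (size v)].

Definition BWT (v : seq (option nat)) : seq (option nat) :=
  [seq last None row | row <- bwt_matrix v].

Definition runs (s : seq (option nat)) : nat :=
  match s with
  | [::] => 0
  | _ :: s' => 1 + count (fun i => nth None s i != nth None s i.+1)
                         (iota 0 (size s'))
  end.

(* Sort the rotations of w_lin$ and record for each row its (k-1)-prefix and its last
   symbol.  Rows sharing a prefix are contiguous in the sorted matrix, so a new
   (prefix, last symbol) pair can only appear where the prefix changes or where the BWT
   has a run boundary: #pairs <= #prefixes + (r - 1).  For rows whose prefix avoids $,
   the pair (c, a) is the k-factor a c of w_lin; these include all sigma^k de Bruijn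
   windows, whereas there are at most sigma^(k-1) prefixes c over the alphabet.
   Hence r - 1 >= sigma^k - sigma^(k-1). *)

From mathcomp Require Import all_boot zify.

Set Implicit Arguments.
Unset Strict Implicit.
Unset Printing Implicit Defensive.

Lemma leq_size_undup (T : eqType) (s1 s2 : seq T) :
  {subset s1 <= s2} -> size (undup s1) <= size (undup s2).
Proof.
move=> sub12; apply: uniq_leq_size (undup_uniq s1) _ => x.
by rewrite !mem_undup; apply: sub12.
Qed.

Lemma size_undup_map_le (T1 T2 : eqType) (h : T1 -> T2) (s : seq T1) :
  size (undup (map h s)) <= size (undup s).
Proof.
rewrite -(size_map h (undup s)); apply: uniq_leq_size (undup_uniq _) _ => y.
by rewrite mem_undup => /mapP [x xs ->]; rewrite map_f ?mem_undup.
Qed.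

Lemma size_undup_map_inj (T1 T2 : eqType) (h : T1 -> T2) (s : seq T1) :
  injective h -> size (undup (map h s)) = size (undup s).
Proof. by move=> h_inj; rewrite undup_map_inj // size_map. Qed.

Lemma size_undup_cons (T : eqType) (x : T) (s : seq T) :
  size (undup (x :: s)) = (x \notin s) + size (undup s).
Proof. by rewrite /=; case: ifP. Qed.

Lemma size_undup_filter (T : eqType) (p : pred T) (s : seq T) :
  size (undup s) = size (undup (filter p s)) + size (undup (filter (predC p) s)).
Proof. by rewrite -!filter_undup !size_filter count_predC. Qed.

Fixpoint changes (T : eqType) (s : seq T) : nat :=
  if s is x :: (y :: _) as s' then (x != y) + changes s' else 0.

Lemma runs_changes (x : option nat) (s : seq (option nat)) :
  runs (x :: s) = (changes (x :: s)).+1.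
Proof.
rewrite /runs add1n; congr _.+1.
elim: s x => [|y s IH] x //.
have -> : changes [:: x, y & s] = (x != y) + changes (y :: s) by [].
rewrite -(IH y) /= -[1]/(1 + 0) iotaDl count_map.
by congr (_ + _); apply: eq_count.
Qed.

Section SortedPairs.

Variables (A B C : eqType) (le : rel A) (f : A -> B) (g : A -> C).
Hypothesis le_trans : transitive le.
Hypothesis f_convex : forall a b c, le a b -> le b c -> f a = f c -> f b = f a.

Lemma size_undup_pairs_sorted (s : seq A) : sorted le s ->
  size (undup [seq (f x, g x) | x <- s]) <= size (undup (map f s)) + changes (map g s).
Proof.
elim: s => [|x [|y s] IH] // /andP [le_xy path_ys].
have {IH} := IH path_ys.
set P := [seq (f z, g z) | z <- y :: s]; set F := map f (y :: s).
(* A new pair needs a new key, or else f y = f x by convexity and g changes at x. *)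
have new_pair : ((f x, g x) \notin P) <= (f x \notin F) + (g x != g y).
  have [fxF|_] := boolP (f x \in F); last by rewrite (leq_trans (leq_b1 _)).
  have fyx : f y = f x.
    move: fxF; rewrite inE => /orP [/eqP -> //|/mapP [z zs fxz]].
    exact: f_convex le_xy (allP (order_path_min le_trans path_ys) z zs) fxz.
  have [gxy|] := eqVneq (g x) (g y); last by rewrite leq_b1.
  by rewrite gxy -fyx inE eqxx.
have -> : [seq (f z, g z) | z <- [:: x, y & s]] = (f x, g x) :: P by [].
have -> : map f [:: x, y & s] = f x :: F by [].
have -> : changes (map g [:: x, y & s]) = (g x != g y) + changes (map g (y :: s)) by [].
rewrite (size_undup_cons (f x, g x)) (size_undup_cons (f x)) addnACA.
exact: leq_add.
Qed.

Lemma size_undup_pairs_sorted_filter (p : pred B) (s : seq A) : sorted le s ->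
  size (undup [seq (f x, g x) | x <- s & p (f x)])
    <= size (undup [seq f x | x <- s & p (f x)]) + changes (map g s).
Proof.
move/size_undup_pairs_sorted.
rewrite (size_undup_filter (preim fst p)) (size_undup_filter p) !filter_map.
have := size_undup_map_le fst [seq (f x, g x) | x <- s & ~~ p (f x)].
rewrite -map_comp.
set bad_keys := size (undup _); set bad_pairs := size (undup _).
set good_pairs := size (undup [seq (f x, g x) | x <- s & p (f x)]).
set good_keys := size (undup [seq f x | x <- s & p (f x)]).
lia.
Qed.

End SortedPairs.

Lemma sym_lt_irr (x : option nat) : sym_lt x x = false.
Proof. by case: x => //= a; rewrite ltnn. Qed.

Lemma sym_lt_asym (x y : option nat) : sym_lt x y -> sym_lt y x = false.
Proof. by case: x => [a|]; case: y => [b|] //=; lia. Qed.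

Lemma sym_lt_trans : transitive sym_lt.
Proof. by case=> [b|] [a|] [c|] //=; lia. Qed.

Lemma sym_lt_total (x y : option nat) : x != y -> sym_lt x y || sym_lt y x.
Proof.
case: x => [a|]; case: y => [b|] //= neq_ab.
by rewrite -neq_ltn; apply: contraNneq neq_ab => ->.
Qed.

Lemma lex_le_trans : transitive lex_le.
Proof.
move=> t s; elim: s t => [|x s IH] [|y t] [|z u] //=.
case/orP=> [lt_yx|/andP [/eqP <- le_st]]; case/orP=> [lt_xz|/andP [/eqP <- le_tu]].
- by rewrite (sym_lt_trans lt_yx lt_xz).
- by rewrite lt_yx.
- by rewrite lt_xz.
- by rewrite eqxx (IH _ _ le_st le_tu) orbT.
Qed.

Lemma lex_le_total : total lex_le.
Proof.
elim=> [|x s IH] [|y t] //=.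
have [<-|neq_xy] := eqVneq x y; first by rewrite sym_lt_irr /= IH.
by case/orP: (sym_lt_total neq_xy) => ->; rewrite ?orbT.
Qed.

Lemma lex_le_take (m : nat) (a b c : seq (option nat)) :
  lex_le a b -> lex_le b c -> take m a = take m c -> take m b = take m a.
Proof.
elim: m a b c => [|m IH] a b c; first by rewrite !take0.
case: a => [|x a]; case: c => [|z c] //=; first by case: b.
case: b => [|y b] //= le_xb le_bz [eq_xz eq_ac]; subst z.
case/orP: le_xb => [lt_xy|/andP [/eqP eq_xy le_ab]].
  case/orP: le_bz => [/sym_lt_asym|/andP [/eqP eq_yx _]].
    by rewrite lt_xy.
  by rewrite eq_yx sym_lt_irr in lt_xy.
subst y; case/orP: le_bz => [|/andP [_ le_bc]]; first by rewrite sym_lt_irr.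
by rewrite (IH a b c le_ab le_bc eq_ac).
Qed.

Lemma rot_rcons (T : Type) (s : seq T) (x : T) (j : nat) :
  j <= size s -> rot j (rcons s x) = drop j s ++ x :: take j s.
Proof. by move=> le_j; rewrite /rot drop_rcons // -!cats1 takel_cat // -catA. Qed.

Section EndMarked.

Variable T : eqType.

Definition endmarked (w : seq T) : seq (option T) := rcons (map Some w) None.

Lemma size_endmarked (w : seq T) : size (endmarked w) = (size w).+1.
Proof. by rewrite size_rcons size_map. Qed.

Lemma rot_endmarked (w : seq T) (j : nat) : j <= size w ->
  rot j (endmarked w) = map Some (drop j w) ++ None :: map Some (take j w).
Proof. by move=> le_j; rewrite rot_rcons ?size_map // map_drop map_take. Qed.

Lemma rot_endmarked_window (w : seq T) (m t : nat) : t + m < size w ->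
  let r := rot t.+1 (endmarked w) in
  last None r :: take m r = map Some (take m.+1 (drop t w)).
Proof.
move=> lt_tm /=; have x0 : T by case: w lt_tm => [|x0 ?].
rewrite rot_endmarked; last lia.
rewrite takel_cat ?size_map ?size_drop; last lia.
rewrite last_cat /= (take_nth x0); last lia.
by rewrite map_rcons last_rcons [drop t w](drop_nth x0) ?map_take //; lia.
Qed.

Lemma take_rot_endmarked (w : seq T) (m j : nat) : j <= size w ->
  None \notin take m (rot j (endmarked w)) ->
  take m (rot j (endmarked w)) = map Some (take m (drop j w)) /\ j + m <= size w.
Proof.
move=> le_j; rewrite rot_endmarked //.
have [le_m|lt_m] := leqP m (size w - j).
  by rewrite takel_cat ?size_map ?size_drop // map_take; split => //; lia.
rewrite take_cat size_map size_drop ltnNge (ltnW lt_m) /=.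
rewrite -(subnK (_ : 1 <= m - (size w - j))) ?subn_gt0 // addn1 /=.
by rewrite mem_cat inE eqxx orbT.
Qed.

End EndMarked.

Definition factors (T : Type) (w : seq T) (m : nat) : seq (seq T) :=
  [seq take m (drop t w) | t <- iota 0 ((size w).+1 - m)].

Lemma factorsP (T : eqType) (w : seq T) (m : nat) (c : seq T) :
  reflect (exists2 t, t + m <= size w & c = take m (drop t w)) (c \in factors w m).
Proof.
apply: (iffP mapP) => [[t]|[t le_tm ->]]; last by exists t; rewrite // mem_iota; lia.
by rewrite mem_iota => lt_t ->; exists t => //; lia.
Qed.

Lemma size_undup_factors_bwt (w : seq nat) (m : nat) :
  size (undup (factors w m.+1)) <= size (undup (factors w m)) + changes (BWT (endmarked w)).
Proof.
set R := [seq rot j (endmarked w) | j <- iota 0 (size (endmarked w))].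
set good := fun c : seq (option nat) => None \notin c.
have sorted_pairs := size_undup_pairs_sorted_filter (last None) lex_le_trans
  (@lex_le_take m) good (sort_sorted lex_le_total R).
have pairs_ge : size (undup (factors w m.+1))
    <= size (undup [seq (take m r, last None r) | r <- sort lex_le R & good (take m r)]).
  rewrite -(size_undup_map_inj _ (inj_map (@Some_inj _))).
  apply: leq_trans (size_undup_map_le (fun pr => pr.2 :: pr.1) _).
  apply: leq_size_undup => _ /mapP [_ /factorsP [t le_t ->] ->].
  have lt_t : t + m < size w by rewrite -addnS.
  have := rot_endmarked_window lt_t; set r := rot t.+1 _ => window_r.
  have good_r : good (take m r).
    have : None \notin last None r :: take m r by rewrite window_r; apply/mapP => -[].
    by rewrite inE negb_or => /andP [].
  have R_r : r \in sort lex_le R.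
    by rewrite mem_sort; apply: map_f; rewrite mem_iota size_endmarked; lia.
  rewrite -window_r; apply/mapP; exists (take m r, last None r) => //.
  by apply/mapP; exists r; rewrite // mem_filter good_r.
have keys_le : size (undup [seq take m r | r <- sort lex_le R & good (take m r)])
    <= size (undup (factors w m)).
  rewrite -(size_undup_map_inj (factors w m) (inj_map (@Some_inj _))).
  apply: leq_size_undup => _ /mapP [r + ->]; rewrite mem_filter mem_sort.
  case/andP=> good_r /mapP [j]; rewrite mem_iota size_endmarked => lt_j r_j.
  rewrite {}r_j in good_r *.
  have [-> le_jm] := take_rot_endmarked (ltnSE lt_j) good_r.
  by apply: map_f; apply/factorsP; exists j.
apply: leq_trans pairs_ge _; apply: leq_trans sorted_pairs _.
by rewrite leq_add2r.
Qed.

Fixpoint words (T : Type) (A : seq T) (m : nat) : seq (seq T) :=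
  if m is m'.+1 then [seq a :: c | a <- A, c <- words A m'] else [:: [::]].

Lemma size_words (T : Type) (A : seq T) (m : nat) : size (words A m) = size A ^ m.
Proof. by elim: m => [|m IH] //=; rewrite size_allpairs IH expnS. Qed.

Lemma mem_words (T : eqType) (A : seq T) (c : seq T) :
  {subset c <= A} -> c \in words A (size c).
Proof.
elim: c => [|a c IH] //= sub_acA.
apply: allpairs_f; first by apply: sub_acA; rewrite inE eqxx.
by apply: IH => x xc; apply: sub_acA; rewrite inE xc orbT.
Qed.

Lemma size_undup_factors_le (T : eqType) (A w : seq T) (m : nat) :
  {subset w <= A} -> size (undup (factors w m)) <= size A ^ m.
Proof.
move=> sub_wA; rewrite -size_words; apply: uniq_leq_size (undup_uniq _) _.
move=> c; rewrite mem_undup => /factorsP [t le_tm ->].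
have size_c : size (take m (drop t w)) = m by rewrite size_takel // size_drop; lia.
rewrite -[in words A m]size_c.
by apply: mem_words => x /mem_take /mem_drop; apply: sub_wA.
Qed.

Lemma nth_rot (T : Type) (x0 : T) (s : seq T) (i x : nat) :
  i <= size s -> x < size s -> nth x0 (rot i s) x = nth x0 s ((x + i) %% size s).
Proof.
move=> le_i lt_x; rewrite /rot nth_cat size_drop; case: ltnP => h.
  by rewrite nth_drop modn_small; [congr nth; lia | lia].
rewrite nth_take; last lia.
have -> : x + i = (x - (size s - i)) + size s by lia.
by rewrite modnDr modn_small //; lia.
Qed.

Lemma cyc_window_rot (s : seq nat) (k i t : nat) : i <= size s ->
  cyc_window (rot i s) k t = cyc_window s k ((t + i) %% size s).
Proof.
move=> le_i; rewrite /cyc_window size_rot.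
have [/size0nil ->|s_gt0] := posnP (size s).
  by rewrite rot_oversize //; apply: eq_map => j; rewrite !nth_nil.
apply: eq_map => j; rewrite nth_rot ?ltn_pmod // !modnDml.
by rewrite addnAC.
Qed.

Lemma rot_cyc_window_inj (s : seq nat) (k i : nat) :
  {in gtn (size s) &, injective (cyc_window s k)} ->
  {in gtn (size s) &, injective (cyc_window (rot i s) k)}.
Proof.
move=> inj_s; have [le_i|lt_i] := leqP i (size s); last by rewrite rot_oversize // ltnW.
move=> t1 t2 lt_t1 lt_t2; rewrite !cyc_window_rot // => /inj_s.
have s_gt0 : 0 < size s by apply: leq_ltn_trans lt_t1.
rewrite !inE !ltn_pmod // => /(_ isT isT) /eqP.
by rewrite eqn_modDr !modn_small // => /eqP.
Qed.

Lemma cyc_window_cat_take (u : seq nat) (k t : nat) : t < size u -> k <= (size u).+1 ->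
  cyc_window u k t = take k (drop t (u ++ take k.-1 u)).
Proof.
move=> lt_t le_k; have size_lin : size (u ++ take k.-1 u) = size u + k.-1.
  by rewrite size_cat size_takel //; lia.
apply: (@eq_from_nth _ 0).
  by rewrite size_map size_iota size_takel // size_drop size_lin; lia.
move=> j; rewrite size_map size_iota => lt_j.
rewrite (nth_map 0) ?size_iota // nth_iota // nth_take // nth_drop nth_cat.
case: ltnP => le_u; first by rewrite modn_small.
rewrite nth_take; last lia.
by rewrite -{1}(subnK le_u) modnDr modn_small //; lia.
Qed.

Lemma size_undup_factors_cat_take (u : seq nat) (k : nat) : k <= (size u).+1 ->
  {in gtn (size u) &, injective (cyc_window u k)} ->
  size u <= size (undup (factors (u ++ take k.-1 u) k)).
Proof.
move=> le_k inj_u; rewrite -[X in X <= _](size_iota 0) -(size_map (cyc_window u k)).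
apply: uniq_leq_size.
  rewrite map_inj_in_uniq ?iota_uniq // => t1 t2.
  by rewrite !mem_iota /= => lt_t1 lt_t2; apply: inj_u.
move=> _ /mapP [t + ->]; rewrite mem_iota /= => lt_t.
have le_tk : t + k <= size (u ++ take k.-1 u) by rewrite size_cat size_takel; lia.
by rewrite mem_undup cyc_window_cat_take //; apply/factorsP; exists t.
Qed.

Lemma deBruijn_cyc_window_inj (sigma k : nat) (D : seq nat) :
  is_deBruijn sigma k D -> {in gtn (size D) &, injective (cyc_window D k)}.
Proof.
move=> [_ [letters_D unique_window]] t1 t2; rewrite !inE => lt_t1 lt_t2 eq_w.
set W := cyc_window D k t1.
have D_gt0 : 0 < size D by apply: leq_ltn_trans lt_t1.
have := unique_window W; rewrite size_map size_iota => /(_ erefl).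
have letters_W : all (fun a => a < sigma) W.
  by apply/allP => _ /mapP [j _ ->]; apply: (allP letters_D); rewrite mem_nth ?ltn_pmod.
move=> /(_ letters_W); rewrite -size_filter.
have : t1 \in [seq t <- iota 0 (size D) | cyc_window D k t == W].
  by rewrite mem_filter mem_iota eqxx.
have : t2 \in [seq t <- iota 0 (size D) | cyc_window D k t == W].
  by rewrite mem_filter mem_iota -eq_w eqxx.
by case: filter => [|x [|]] //; rewrite !inE => /eqP -> /eqP ->.
Qed.

Theorem lemma6 (sigma k : nat) (D U : seq nat) (i : nat) :
  2 <= sigma -> 1 <= k ->
  is_deBruijn sigma k D ->
  U = rot i D ->
  let w_lin := U ++ take (k - 1) U in
  sigma ^ (k - 1) * (sigma - 1) + 1 <= runs (BWT (rcons (map Some w_lin) None)).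
Proof.
move=> sigma_ge2 k_gt0 deB ->; cbv zeta.
set w_lin := rot i D ++ _; rewrite -/(endmarked w_lin).
have [size_D [letters_D _]] := deB.
have size_U : size (rot i D) = sigma ^ k by rewrite size_rot.
have le_kU : k <= (size (rot i D)).+1 by rewrite size_U; apply/leqW/ltnW/ltn_expl.
have windows_inj : {in gtn (size (rot i D)) &, injective (cyc_window (rot i D) k)}.
  by rewrite size_rot; apply/rot_cyc_window_inj/(deBruijn_cyc_window_inj deB).
have := size_undup_factors_cat_take le_kU windows_inj.
rewrite size_U -subn1 -/w_lin => factors_ge.
have letters_w : {subset w_lin <= iota 0 sigma}.
  move=> a; rewrite mem_iota mem_cat => a_w; apply: (allP letters_D).
  by case/orP: a_w => [|/mem_take]; rewrite mem_rot.
have := size_undup_factors_le (k - 1) letters_w; rewrite size_iota => factors_le.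
have := size_undup_factors_bwt w_lin (k - 1); rewrite subn1 prednK // -subn1 => bwt.
have : size (BWT (endmarked w_lin)) = (size w_lin).+1.
  by rewrite /BWT /bwt_matrix size_map size_sort size_map size_iota size_endmarked.
case: (BWT _) bwt => [|x s] // bwt _; rewrite runs_changes.
have : sigma ^ k <= sigma ^ (k - 1) + changes (x :: s).
  by apply: leq_trans factors_ge (leq_trans bwt _); rewrite leq_add2r.
by rewrite addn1 ltnS mulnBr muln1 -expnSr subn1 prednK // leq_subLR.
Qed.
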